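(* Let $(D,D_{t'})$ be a proper pair (in the sense allowing contemporaneous effects) and let $A,C\subseteq V\cup W$ and $B\subseteq V$ be pairwise disjoint. Let $E\subseteq V$ be a tail ancestral set such that $\mathrm{de}_\bullet(B)\cap E=\emptyset$, $E\subseteq C$ and $\mathrm{pa}_\bullet(B)\subseteq E$. If $B$ is $\delta$-separated from $A$ given $C$ in $D$, then for every $0<t\le t'$, $\nu_t^B$ is $d$-separated from $\bar\nu_{t-1}^A$ given $\bar\nu_{t-1}^{B\cup C}\cup\nu_t^E$ in $D_{t'}$.
   Context: $V$, $W$ are finite disjoint sets ($W$ = baseline nodes). Tailed directed graph: graph on $V\cup W$ with directed edges $i\to j$ and tailed directed edges $i\bullet\!\!\to j$; $i\ast\!\!\to j$ means $i\to j$ or $i\bullet\!\!\to j$. Only baseline nodes have edges into baseline nodes, and these are tailed. $D^-$ is the DG with $i\to j$ iff $i\ast\!\!\to j$ in $D$. $\mathrm{de}_\bullet(B)$: nodes $k$ reachable by a directed path of tailed edges only starting in $B$; $\mathrm{pa}_\bullet(B)$: nodes $k$ with $k\bullet\!\!\to j$, $j\in B$; these sets exclude $B$. A set $E\subseteq V$ is tail ancestral if there are no $i\in V\setminus E$, $j\in E$ with $i\bullet\!\!\to j$. DG terminology: path = walk without repeated nodes; collider = non-endpoint node with both adjacent edges pointing into it; $\mathrm{an}(C)$ = nodes with a directed path into $C$. $\delta$-separation in a DG $G$: with $G^B$ obtained by deleting all edges $i\to j$ with $i\in B$, $B$ is $\delta$-separated from $A$ given $C$ if every path in $G^B$ between $A$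 and $B$ contains a noncollider in $C$ or a collider not in $\mathrm{an}_G(C)\cup C$. In a tailed directed graph $D$, $\delta$-separation means $\delta$-separation in $D^-$. $d$-separation in a DAG: same blocking condition on paths of the DAG, with no edge deletion. Unrolling: the unrolled version of $D$ on $t'$ lags is the DAG $D_{t'}$ on nodes $V^{t'}=\bigcup_{i\in V}\{\nu_0^i,\dots,\nu_{t'}^i\}$ and $W^{t'}=\{\nu_0^i:i\in W\}$, with $\nu_s^i\to\nu_t^j$ if $s<t$ and $i\ast\!\!\to j$, and $\nu_t^i\to\nu_t^j$ if $i\bullet\!\!\to j$. Rolling: the rolled version of a DAG $D_{t'}$ on such a node set is the tailed directed graph with $i\ast\!\!\to j$ if $\nu_s^i\to\nu_t^j$ for some $s\le t$, and $i\bullet\!\!\to j$ iff $\nu_t^i\to\nu_t^j$ for some $t$. Standing assumption: if $\nu_t^i\to\nu_t^j$ is present then so is $\nu_s^i\to\nu_u^j$ for some $s<u$. $(D,D_{t'})$ is proper if $D$ is the rolled version of $D_{t'}$ or $D_{t'}$ is the unrolled version of $D$. Notation: $\nu_t^A=\{\nu_t^i:i\in A\}$, $\bar\nu_t^A=\{\nu_s^i:i\in A, s\le t\}$ (for baseline $i$, only $\nu_0^i$). *)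

From mathcomp Require Import all_boot.
Set Implicit Arguments. Unset Strict Implicit. Unset Printing Implicit Defensive.

Section Paths.
Variable T : eqType.

Definition step_ok (g : rel T) (x : T) (st : bool * T) : bool :=
  if st.1 then g x st.2 else g st.2 x.

Fixpoint walk (g : rel T) (x : T) (s : seq (bool * T)) : bool :=
  match s with
  | [::] => true
  | st :: s' => step_ok g x st && walk g st.2 s'
  end.

Definition wnodes (x : T) (s : seq (bool * T)) : seq T := x :: map snd s.

Definition is_path (g : rel T) (x : T) (s : seq (bool * T)) : bool :=
  walk g x s && uniq (wnodes x s).

Definition wlast (x : T) (s : seq (bool * T)) : T := last x (map snd s).

(* For 0 < k < size s, the k-th node of the path (wnodes x s)`_k is internal;
   its incoming edge is step k-1 and its outgoing edge is step k.  It is a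
   collider iff both adjacent edges point into it: step k-1 is forward
   (prev -> node) and step k is backward (next -> node). *)
Definition collider_at (x : T) (s : seq (bool * T)) (k : nat) : bool :=
  (nth (true, x) s k.-1).1 && ~~ (nth (true, x) s k).1.

(* ancestors: nodes with a directed path into C (length 0 allowed; the
   definitions below always use an(C) together with C, so this is harmless) *)
Definition anc (g : rel T) (C : pred T) (v : T) : Prop :=
  exists p : seq T, path g v p /\ last v p \in C.

Definition blocked (gan : rel T) (C : pred T) (x : T) (s : seq (bool * T)) : Prop :=
  exists k, 0 < k < size s /\
    let v := nth x (wnodes x s) k in
    if collider_at x s k then ~ (v \in C \/ anc gan C v)
    else v \in C.

Definition sep_gen (gpath gan : rel T) (A B C : pred T) : Prop :=
  forall (x : T) (s : seq (bool * T)), is_path gpath x s ->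
    (x \in A /\ wlast x s \in B) \/ (x \in B /\ wlast x s \in A) ->
    blocked gan C x s.

Definition dsep (g : rel T) (A B C : pred T) : Prop := sep_gen g g A B C.

Definition deltasep (g : rel T) (A B C : pred T) : Prop :=
  sep_gen [rel i j | g i j && (i \notin B)] g A B C.
End Paths.

(* ---------- Tailed directed graphs ----------
   Nodes: a finType N = V ∪ W, with W : {set N} the baseline nodes and
   V = ~: W.  A tailed directed graph is given by two relations:
     star i j  <->  i *-> j   (i -> j or i •-> j)
     tail i j  <->  i •-> j
   with tail ⊆ star; an edge i *-> j with ~~ tail i j is a plain i -> j.
   So D^- is exactly the DG [rel i j | star i j]. *)
Section Tailed.
Variable N : finType.
Variable W : {set N}.

Definition tailed_graph (star tail : rel N) : Prop :=
  (forall i j, tail i j -> star i j) /\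
  (forall i j, j \in W -> star i j -> (i \in W) && tail i j).

Definition tde (tail : rel N) (B : {set N}) (k : N) : Prop :=
  k \notin B /\ exists2 b, b \in B & exists p : seq N, path tail b p /\ last b p = k.

Definition tpa (tail : rel N) (B : {set N}) (k : N) : Prop :=
  k \notin B /\ exists2 j, j \in B & tail k j.

Definition tail_ancestral (tail : rel N) (E : {set N}) : Prop :=
  E \subset ~: W /\
  forall i j, i \in ~: W -> i \notin E -> j \in E -> ~~ tail i j.

(* ---------- Time-unrolled graphs ----------
   The node nu_t^i is represented by (i, t) : N * nat.  The node set of
   D_{t'} is V^{t'} ∪ W^{t'}, i.e. the pairs satisfying [valid]. *)
Definition valid (t' : nat) (x : N * nat) : bool :=
  (x.2 <= t') && ((x.1 \in W) ==> (x.2 == 0)).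

Definition unrolled (star tail : rel N) (t' : nat) : rel (N * nat) :=
  fun x y => [&& valid t' x, valid t' y &
    ((x.2 < y.2) && star x.1 y.1) || ((x.2 == y.2) && tail x.1 y.1)].

Definition is_dag_on (t' : nat) (G : rel (N * nat)) : Prop :=
  (forall x y, G x y -> [&& valid t' x, valid t' y & x.2 <= y.2]) /\
  (forall x p, path G x p -> last x p = x -> p = [::]).

Definition standing (G : rel (N * nat)) : Prop :=
  forall i j t, G (i, t) (j, t) -> exists s u, s < u /\ G (i, s) (j, u).

Definition rolled_of (G : rel (N * nat)) (star tail : rel N) : Prop :=
  (forall i j, star i j <-> exists s t, s <= t /\ G (i, s) (j, t)) /\
  (forall i j, tail i j <-> exists t, G (i, t) (j, t)).

Definition proper_pair (star tail : rel N) (t' : nat) (G : rel (N * nat)) : Prop :=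
  tailed_graph star tail /\ is_dag_on t' G /\
  ((standing G /\ rolled_of G star tail) \/ G =2 unrolled star tail t').

Definition nu (A : {set N}) (t : nat) : pred (N * nat) :=
  [pred x | (x.1 \in A) && (x.2 == t)].
Definition nubar (t' : nat) (A : {set N}) (t : nat) : pred (N * nat) :=
  [pred x | [&& x.1 \in A, x.2 <= t & valid t' x]].
End Tailed.

(* Suppose a walk in D_{t'} from \bar\nu^A_{t-1} to \nu^B_t is d-connecting given
   Z = \bar\nu^{B \cup C}_{t-1} \cup \nu^E_t, and cut it at its first arrival in \nu^B_t.
   Edges never go back in time and colliders are ancestors of Z, so every node of the cut
   walk has time at most t.  A node at time t must be a collider whose variable lies in E:
   otherwise the contemporaneous (tailed) edges around it, together with tail-ancestrality
   of E and pa_\bullet(B) \subseteq E, would put a noncollider into \nu^E_t \subseteq Z.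
   Hence the last edge points into \nu^B_t (as de_\bullet(B) \cap E is empty),
   noncolliders are at times below t and outside B \cup C, and forgetting the time indices
   gives a walk in D^B from A to B whose colliders are ancestors of B \cup C.  Rerouting at
   the first collider that is an ancestor of B only, and removing loops, yields a path
   contradicting the delta-separation of B from A given C. *)

From mathcomp Require Import all_boot zify.
From Stdlib Require Import Classical Wf_nat.
Set Implicit Arguments. Unset Strict Implicit. Unset Printing Implicit Defensive.

(* [lia] after discarding every hypothesis that is not an (in)equality:
   boolean atoms and implications in the context make [zify] very slow. *)
Ltac nat_lia :=
  repeat match goal with
  | H : ?P |- _ =>
      lazymatch P with
      | is_true (leq _ _) => fail
      | is_true (leq _ _ && leq _ _) => fail
      | @eq _ _ _ => fail
      | _ => clear H
      end
  end; lia.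

Definition is_collider (d : nat -> bool) k := d k.-1 && ~~ d k.

Lemma fwd_run_or_collider (d : nat -> bool) k j : k < j -> d k ->
  (forall i, k <= i < j -> d i) \/
  exists r, [/\ k < r < j, is_collider d r & forall i, k <= i < r -> d i].
Proof.
elim: j => // j IH; rewrite ltnS leq_eqVlt => /orP[/eqP -> dj | kj dk].
  by left=> i; rewrite ltnS -eqn_leq => /eqP <-.
have [run | [r [/andP[kr rj] col run]]] := IH kj dk; last first.
  by right; exists r; rewrite kr ltnW.
case dj: (d j).
  left=> i /andP[ki]; rewrite ltnS leq_eqVlt => /orP[/eqP -> // | ij].
  by apply: run; rewrite ki.
right; exists j; split=> //; first by rewrite kj /=.
by rewrite /is_collider dj andbT; apply: run; lia.
Qed.

Lemma bwd_run_or_collider (d : nat -> bool) k : 0 < k -> ~~ d k.-1 ->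
  (forall l, l < k -> ~~ d l) \/
  exists i, [/\ 0 < i < k, is_collider d i & forall l, i <= l < k -> ~~ d l].
Proof.
elim: k => // k IH _; case: k IH => [|k] IH dk.
  by left=> l; rewrite ltnS leqn0 => /eqP ->.
case dk1: (d k).
  right; exists k.+1; split; [by rewrite ltnSn | by rewrite /is_collider dk1 | ].
  by move=> l; rewrite ltnS -eqn_leq => /eqP <-.
have [run | [i [/andP[i0 ik] col run]]] := IH isT (negbT dk1).
  by left=> l; rewrite ltnS leq_eqVlt => /orP[/eqP -> // | /run].
right; exists i; split=> //; first by rewrite i0 ltnW.
move=> l /andP[il]; rewrite ltnS leq_eqVlt => /orP[/eqP -> // | lk].
by apply: run; rewrite il.
Qed.

Section IndexedWalks.
Variable T : eqType.
Implicit Types (g : rel T) (f : nat -> T) (d : nat -> bool).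

(* A walk is encoded by its nodes [f 0], ..., [f m] and the directions of its steps
   ([d i] iff step [i] is the edge [f i -> f i.+1]), so that cutting and splicing
   walks is arithmetic on indices. *)

Definition fwalk g m f d : Prop :=
  forall i, i < m -> if d i then g (f i) (f i.+1) else g (f i.+1) (f i).

Definition fconnecting (Pcol Pnon : T -> Prop) m f d : Prop :=
  forall k, 0 < k < m -> if is_collider d k then Pcol (f k) else Pnon (f k).

Definition active g (C : pred T) (v : T) : Prop := v \in C \/ anc g C v.

Definition wfun (x : T) s : nat -> T := nth x (wnodes x s).
Definition wdir (x : T) s : nat -> bool := fun i => (nth (true, x) s i).1.

Lemma wfunS x b y s i : i <= size s -> wfun x ((b, y) :: s) i.+1 = wfun y s i.
Proof. by move=> i_s; rewrite /wfun /= (set_nth_default y) //= size_map. Qed.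

Lemma wdirS x b y s i : i < size s -> wdir x ((b, y) :: s) i.+1 = wdir y s i.
Proof. by move=> i_s; rewrite /wdir /= (set_nth_default (true, y)). Qed.

Lemma walk_fwalk g x s : walk g x s <-> fwalk g (size s) (wfun x s) (wdir x s).
Proof.
elim: s x => [|[b y] s IH] x /=; first by split=> // _ i; rewrite ltn0.
rewrite /step_ok /=; split.
  case/andP=> e /(IH y) w [|i] //; rewrite ltnS => i_s.
  by rewrite wdirS // !wfunS // ?(ltnW i_s) //; apply: w.
move=> w; rewrite (w 0) //; apply/(IH y) => i i_s.
by have := w i.+1 i_s; rewrite wdirS // !wfunS // ?(ltnW i_s).
Qed.

Lemma wlast_wfun (x : T) s : wlast x s = wfun x s (size s).
Proof. by rewrite /wfun /wnodes -(size_map snd) -[size _]/(size (x :: map snd s)).-1 nth_last. Qed.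

Lemma not_blocked_fconnecting gan C x s : ~ blocked gan C x s <->
  fconnecting (active gan C) (fun v => v \notin C) (size s) (wfun x s) (wdir x s).
Proof.
split=> [nb k k_int | conn [k [k_int]] /=].
  rewrite /is_collider; case: ifP => col; [apply: NNPP | apply/negP]; move=> h; apply: nb.
    by exists k; split=> //=; rewrite /collider_at col.
  by exists k; split=> //=; rewrite /collider_at col.
by move: (conn k k_int); rewrite /collider_at /is_collider; case: ifP => _ // /negP.
Qed.

Lemma fwalk_eq g m f d f' d' : (forall i, i <= m -> f i = f' i) ->
  (forall i, i < m -> d i = d' i) -> fwalk g m f d -> fwalk g m f' d'.
Proof.
by move=> ef ed w i im; rewrite -ed // -ef ?(ltnW im) // -ef //; apply: w.
Qed.

Lemma fconnecting_eq Pcol Pnon m f d f' d' : (forall i, i <= m -> f i = f' i) ->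
  (forall i, i < m -> d i = d' i) ->
  fconnecting Pcol Pnon m f d -> fconnecting Pcol Pnon m f' d'.
Proof.
move=> ef ed conn k /andP[k0 km]; rewrite /is_collider -ed -?ed -?ef //; try lia.
by apply: conn; rewrite k0.
Qed.

Definition fseq m f d : seq (bool * T) := mkseq (fun i => (d i, f i.+1)) m.

Lemma wfun_fseq m f d i : i <= m -> wfun (f 0) (fseq m f d) i = f i.
Proof.
by case: i => [|i] im; rewrite /wfun //= (nth_map (true, f 0)) ?size_mkseq // nth_mkseq.
Qed.

Lemma wdir_fseq m f d i : i < m -> wdir (f 0) (fseq m f d) i = d i.
Proof. by move=> im; rewrite /wdir nth_mkseq. Qed.

Lemma fwalk_is_path g m f d : fwalk g m f d -> uniq (mkseq f m.+1) ->
  is_path g (f 0) (fseq m f d).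
Proof.
move=> w u; apply/andP; split.
  apply/walk_fwalk; rewrite size_mkseq.
  by apply: fwalk_eq w => i i_m; rewrite ?wfun_fseq ?wdir_fseq.
suff -> : wnodes (f 0) (fseq m f d) = mkseq f m.+1 by [].
apply: (@eq_from_nth _ (f 0)) => [|i]; rewrite /wnodes /= !size_map ?size_iota ?size_mkseq //.
by move=> im; rewrite nth_mkseq // -(wfun_fseq f d (im : i <= m)).
Qed.

Lemma fwalk_prefix g m f d j : j <= m -> fwalk g m f d -> fwalk g j f d.
Proof. by move=> jm w i ij; apply: w; exact: leq_trans jm. Qed.

Lemma fconnecting_prefix Pcol Pnon m f d j : j <= m ->
  fconnecting Pcol Pnon m f d -> fconnecting Pcol Pnon j f d.
Proof. by move=> jm conn k /andP[k0 kj]; apply: conn; rewrite k0 (leq_trans kj). Qed.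

Lemma fwalk_rev g m f d : fwalk g m f d ->
  fwalk g m (fun i => f (m - i)) (fun i => ~~ d (m - i.+1)).
Proof.
move=> w i im; have := w (m - i.+1) ltac:(lia).
by rewrite subnSK //; case: (d _).
Qed.

Lemma fconnecting_rev Pcol Pnon m f d : fconnecting Pcol Pnon m f d ->
  fconnecting Pcol Pnon m (fun i => f (m - i)) (fun i => ~~ d (m - i.+1)).
Proof.
move=> conn k /andP[k0 km]; have := conn (m - k) ltac:(lia).
by rewrite /is_collider -subnS prednK // negbK andbC.
Qed.

Lemma fwalk_fwd_run g m f d a b : fwalk g m f d -> a <= b <= m ->
  (forall i, a <= i < b -> d i) -> exists2 p, path g (f a) p & last (f a) p = f b.
Proof.
move=> w; elim: b => [|b IH /andP[ab bm] run].
  by case/andP; rewrite leqn0 => /eqP-> _ _; exists [::].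
move: ab; rewrite leq_eqVlt => /orP[/eqP-> | ab]; first by exists [::].
have [||p pth lst] := IH; [lia | by move=> i ?; apply: run; lia |].
have := w b bm; rewrite run => [e|]; last lia.
by exists (rcons p (f b.+1)); rewrite ?rcons_path ?last_rcons // pth lst e.
Qed.

Lemma fwalk_bwd_run g m f d a b : fwalk g m f d -> a <= b <= m ->
  (forall i, a <= i < b -> ~~ d i) -> exists2 p, path g (f b) p & last (f b) p = f a.
Proof.
move=> w; elim: b => [|b IH /andP[ab bm] run].
  by case/andP; rewrite leqn0 => /eqP-> _ _; exists [::].
move: ab; rewrite leq_eqVlt => /orP[/eqP-> | ab]; first by exists [::].
have [||p pth lst] := IH; [lia | by move=> i ?; apply: run; lia |].
have := w b bm; rewrite (negbTE (run b _)) => [e|]; last lia.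
by exists (f b :: p); rewrite //= e.
Qed.

Lemma fwalk_cat_path g m f d k q : k <= m -> fwalk g m f d -> path g (f k) q ->
  fwalk g (k + size q) (fun i => if i < k then f i else nth (f k) (f k :: q) (i - k))
    (fun i => if i < k then d i else true).
Proof.
move=> km w /(pathP (f k)) pq i iq; case: (ltnP i k) => ik.
  have := w i (leq_trans ik km); case: ltnP => // ik1.
  have -> : i.+1 = k by lia.
  by rewrite subnn.
by rewrite ltnNge (leqW ik) /= subSn //; apply: pq; lia.
Qed.

Lemma active_path g C v p : path g v p -> active g C (last v p) -> active g C v.
Proof.
move=> pth [inC | [q [pq inC]]]; right; first by exists p.
by exists (p ++ q); rewrite cat_path last_cat pth.
Qed.

End IndexedWalks.

Section LoopRemoval.
Variable T : eqType.
Variables (gpath gan : rel T) (C : pred T).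
Hypothesis gpath_gan : subrel gpath gan.

Let dconnecting := fconnecting (active gan C) (fun v => v \notin C).

Lemma active_at_loop m f d a b : 0 < a -> a < b < m -> f a = f b ->
  fwalk gpath m f d -> dconnecting m f d -> d a.-1 -> ~~ d b -> active gan C (f a).
Proof.
move=> a0 /andP[ab bm] fab w conn da1 db.
case da: (d a); last by have := conn a ltac:(lia); rewrite /is_collider da1 da.
case db1: (d b.-1).
  by have := conn b ltac:(lia); rewrite /is_collider db1 db fab.
have [run | [r [/andP[ar rb] col run]]] := fwd_run_or_collider ab da.
  by rewrite run in db1; lia.
have [|p pth lst] := fwalk_fwd_run w (_ : a <= r <= m) run; first lia.
apply: active_path (sub_path gpath_gan pth) _.
by have := conn r ltac:(lia); rewrite col lst.
Qed.

Lemma fwalk_cut_loop m f d a b : a < b <= m -> f a = f b ->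
  fwalk gpath m f d -> dconnecting m f d ->
  exists f' d', [/\ fwalk gpath (m - (b - a)) f' d', dconnecting (m - (b - a)) f' d',
                    f' 0 = f 0 & f' (m - (b - a)) = f m].
Proof.
move=> /andP[ab bm] fab w conn.
pose f' i := if i <= a then f i else f (i + (b - a)).
pose d' i := if i < a then d i else d (i + (b - a)).
have f'L i : i <= a -> f' i = f i by rewrite /f' => ->.
have d'L i : i < a -> d' i = d i by rewrite /d' => ->.
have d'R i : a <= i -> d' i = d (i + (b - a)) by rewrite /d' ltnNge => ->.
have f'R i : a <= i -> f' i = f (i + (b - a)).
  rewrite /f'; case: ifP => // ia ai; have -> : i = a by lia.
  by rewrite fab; congr f; lia.
exists f', d'; split.
- move=> i im; have [ia|ai] := ltnP i a.
    by rewrite d'L ?f'L; try lia; apply: w; lia.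
  by rewrite d'R ?f'R -?addSn; try lia; apply: w; lia.
- move=> k k_int; rewrite /is_collider; case: (ltngtP k a) => ka.
  + by rewrite !d'L ?f'L; try lia; apply: conn; lia.
  + rewrite !d'R ?f'R; try lia.
    have -> : k.-1 + (b - a) = (k + (b - a)).-1 by lia.
    by apply: conn; lia.
  + subst k; rewrite d'L ?d'R ?f'L ?subnKC; try lia.
    case: ifP => [/andP[da1 db] | /negbT].
      by apply: active_at_loop fab w conn da1 db; lia.
    rewrite negb_and negbK; case/orP => [da1 | db].
      by have := conn a ltac:(lia); rewrite /is_collider (negbTE da1).
    by have := conn b ltac:(lia); rewrite /is_collider db andbF fab.
- by rewrite f'L.
- by rewrite f'R ?subnK //; lia.
Qed.

Lemma sep_gen_no_dconnecting_fwalk (A B : pred T) : sep_gen gpath gan A B C ->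
  forall m f d, fwalk gpath m f d -> f 0 \in A -> f m \in B -> ~ dconnecting m f d.
Proof.
move=> sep m; elim/ltn_ind: m => m IH f d w f0A fmB conn.
have [u | /(uniqPn (f 0))[i [j []]]] := boolP (uniq (mkseq f m.+1)).
  have sm : size (fseq m f d) = m by rewrite size_mkseq.
  have := sep _ _ (fwalk_is_path w u).
  rewrite wlast_wfun sm wfun_fseq // => /(_ (or_introl (conj f0A fmB))).
  apply/not_blocked_fconnecting; rewrite sm.
  by apply: fconnecting_eq conn => k km; rewrite ?wfun_fseq ?wdir_fseq.
rewrite size_mkseq => ij jm; rewrite !nth_mkseq; try lia; move=> fij.
have [|f' [d' [w' conn' f'0 f'm]]] := fwalk_cut_loop (_ : i < j <= m) fij w conn; first lia.
by apply: (IH (m - (j - i)) _ f' d' w'); rewrite ?f'0 ?f'm //; lia.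
Qed.

End LoopRemoval.

Lemma path_first_hit (T : eqType) (g : rel T) (X : pred T) v p :
  path g v p -> last v p \in X ->
  exists q, [/\ path g v q, last v q \in X &
                forall j, j < size q -> nth v (v :: q) j \notin X].
Proof.
elim: p v => [|y p IH] v /=; first by move=> _ vX; exists [::].
case/andP=> e pth lst; have [vX | vnX] := boolP (v \in X); first by exists [::].
have [q [pq lq nq]] := IH y pth lst.
exists (y :: q); split=> //=; first by rewrite e.
case=> [|j] //= jq; rewrite (set_nth_default y) ?nq //; exact: ltnW.
Qed.

Section ColliderTruncation.
Variable T : eqType.
Variables (star : rel T) (B C : pred T).

Let gB := [rel i j | star i j && (i \notin B)].

Lemma fwalk_truncate_at_B m f d : fwalk gB m f d -> f m \in B ->
  fconnecting (active star [predU B & C]) (fun v => v \notin C) m f d ->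
  exists m' f' d', [/\ fwalk gB m' f' d', f' 0 = f 0, f' m' \in B &
    fconnecting (active star C) (fun v => v \notin C) m' f' d'].
Proof.
move=> w fmB conn.
(* The first collider [k] that is not active for [C] has a directed path to [B] whose
   nodes before the last avoid [B \cup C]; the walk is rerouted along it. *)
pose bad k := 0 < k < m /\ is_collider d k /\ ~ active star C (f k).
have [[k bad_k] | no_bad] := classic (exists k, bad k); last first.
  exists m, f, d; split=> // k k_int; have := conn k k_int; case: ifP => // col _.
  by apply: NNPP => nact; apply: no_bad; exists k.
have [{bad_k}k [[[/andP[k0 km] [col nact]] kmin] _]] :=
  dec_inh_nat_subset_has_unique_least_element bad (fun k => classic (bad k)) (ex_intro _ k bad_k).
have [p pth lst] : exists2 p, path star (f k) p & last (f k) p \in [predU B & C].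
  by have := conn k ltac:(nat_lia); rewrite col => -[inX | [p []]]; [exists [::] | exists p].
have [q [pq lq nq]] := path_first_hit pth lst.
have qB : last (f k) q \in B.
  move: lq; rewrite inE => /orP[// | lC]; case: nact; right.
  by exists q.
have pq_B : path gB (f k) q.
  move/(pathP (f k)): pq => pq; apply/(pathP (f k)) => i iq; rewrite /= pq //=.
  by have := nq i iq; rewrite inE negb_or => /andP[].
pose f' i := if i < k then f i else nth (f k) (f k :: q) (i - k).
pose d' i := if i < k then d i else true.
exists (k + size q), f', d'; split.
- exact: fwalk_cat_path (ltnW km) w pq_B.
- by rewrite /f' k0.
- by rewrite /f' ltnNge leq_addr /= addKn -[size q]/((size (f k :: q)).-1) nth_last.
- move=> i i_int; rewrite /is_collider /d' /f'.
  case: (ltngtP i k) => ik.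
  + have -> : i.-1 < k by nat_lia.
    have := conn i ltac:(nat_lia); rewrite /is_collider; case: ifP => // coli _.
    apply: NNPP => nacti; suff /kmin : bad i by nat_lia.
    by split; [nat_lia | split].
  + rewrite ifF ?andbF; last nat_lia.
    by have := nq (i - k) ltac:(nat_lia); rewrite inE negb_or => /andP[].
  + subst i; rewrite andbF subnn.
    by have := nq 0 ltac:(nat_lia); rewrite inE negb_or => /andP[].
Qed.

End ColliderTruncation.

Definition unrolled_edges (N : finType) (W : {set N}) (star tail : rel N) (t' : nat)
    (G : rel (N * nat)) : Prop :=
  forall x y, G x y -> [/\ valid W t' x, valid W t' y &
    (x.2 < y.2 /\ star x.1 y.1) \/ (x.2 = y.2 /\ tail x.1 y.1)].

Lemma proper_pair_unrolled_edges (N : finType) (W : {set N}) star tail t' G :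
  proper_pair W star tail t' G -> unrolled_edges W star tail t' G.
Proof.
case=> _ [[dag _] [[_ [starE tailE]] | eqG]] [i s] [j u] e /=; last first.
  move: e; rewrite eqG => /and3P[vx vy /orP[/andP[su ij] | /andP[/eqP su ij]]].
    by split=> //; left.
  by split=> //; right.
have /and3P[vx vy /= su] := dag _ _ e; split=> //.
case: (ltngtP s u) => [su' | us | su']; first by left; split=> //; apply/starE; exists s, u.
  by rewrite ltnNge su in us.
by right; split=> //; apply/tailE; exists s; rewrite {2}su'.
Qed.

Lemma valid_notin_W (N : finType) (W : {set N}) t' (x : N * nat) :
  valid W t' x -> 0 < x.2 -> x.1 \notin W.
Proof. by case/andP=> _ /implyP x_W x0; apply/negP => /x_W /eqP x2; rewrite x2 in x0. Qed.

Lemma tail_ancestral_closed (N : finType) (W : {set N}) tail (E : {set N}) i j :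
  tail_ancestral W tail E -> i \notin W -> tail i j -> j \in E -> i \in E.
Proof.
case=> _ TA iW ij jE; apply: contraTT ij => iE.
by apply: TA => //; rewrite inE.
Qed.

Section UnrolledGraph.
Variables (N : finType) (W : {set N}) (star tail : rel N) (t' : nat) (G : rel (N * nat)).
Hypothesis tail_star : subrel tail star.
Hypothesis G_edges : unrolled_edges W star tail t' G.

Lemma G_time_le x y : G x y -> x.2 <= y.2.
Proof. by case/G_edges => _ _ [[/ltnW] | [->]]. Qed.

Lemma G_star x y : G x y -> star x.1 y.1.
Proof. by case/G_edges => _ _ [[] | [_ /tail_star]]. Qed.

Lemma G_tail x y : G x y -> x.2 = y.2 -> tail x.1 y.1.
Proof. by case/G_edges => _ _ [[xy _ exy] | []]; first by rewrite exy ltnn in xy. Qed.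

Lemma path_time_le x p : path G x p -> x.2 <= (last x p).2.
Proof. by elim: p x => //= y p IH x /andP[/G_time_le xy /IH]; apply: leq_trans. Qed.

Lemma path_fst x p : path G x p -> path star x.1 (map fst p).
Proof. by elim: p x => //= y p IH x /andP[/G_star -> /IH]. Qed.

Lemma last_fst (x : N * nat) p : last x.1 (map fst p) = (last x p).1.
Proof. by elim: p x => //= y p IH x. Qed.

Variable E : {set N}.
Hypothesis E_tail_ancestral : tail_ancestral W tail E.

Lemma tail_into_E x y : G x y -> 0 < x.2 -> x.2 = y.2 -> y.1 \in E -> x.1 \in E.
Proof.
move=> xy x0 exy; have [vx _ _] := G_edges xy.
exact: tail_ancestral_closed (valid_notin_W vx x0) (G_tail xy exy).
Qed.

Lemma path_tail_into_E x p : path G x p -> 0 < x.2 -> (last x p).2 <= x.2 ->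
  (last x p).1 \in E -> x.1 \in E.
Proof.
elim: p x => //= y p IH x /andP[xy pth] x0 le_x lE.
have exy : x.2 = y.2 by have := G_time_le xy; have := path_time_le pth; lia.
have yE : y.1 \in E by apply: IH; rewrite // -exy.
exact: tail_into_E xy x0 exy yE.
Qed.

Variables (A B C : {set N}) (t : nat).
Hypothesis t_pos : 0 < t.
Hypothesis E_C : E \subset C.

Let Z := [predU nubar W t' (B :|: C) t.-1 & nu E t].

Lemma Z_time z : z \in Z -> z.2 <= t /\ (z.2 = t -> z.1 \in E).
Proof.
rewrite !inE => /orP[/and3P[_ zt _] | /andP[zE /eqP ->]] //.
by split=> [|z_t]; lia.
Qed.

Lemma Z_fst z : z \in Z -> z.1 \in [predU mem B & mem C].
Proof.
by rewrite !inE => /orP[/and3P[-> _ _] // | /andP[/(subsetP E_C) -> _]]; rewrite orbT.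
Qed.

Lemma notin_Z x : valid W t' x -> x \notin Z -> x.2 < t -> (x.1 \notin B) && (x.1 \notin C).
Proof.
move=> vx; rewrite !inE vx andbT negb_or => /andP[+ _] xt.
have -> : x.2 <= t.-1 by lia.
by rewrite andbT negb_or.
Qed.

Lemma E_in_Z x : x.1 \in E -> x.2 = t -> x \in Z.
Proof. by move=> xE xt; rewrite !inE xE xt eqxx orbT. Qed.

Lemma active_Z_time v : active G Z v -> v.2 <= t /\ (v.2 = t -> v.1 \in E).
Proof.
case=> [/Z_time // | [p [pth /Z_time [l_t lE]]]].
have vl := path_time_le pth; split=> [|vt]; first exact: leq_trans vl l_t.
have last_t : (last v p).2 = t by apply/eqP; rewrite eqn_leq l_t -vt vl.
by apply: (path_tail_into_E pth); rewrite ?vt ?last_t ?lE.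
Qed.

Lemma active_Z_fst v : active G Z v -> active star [predU mem B & mem C] v.1.
Proof.
case=> [/Z_fst | [p [pth /Z_fst]]]; [by left | right].
by exists (map fst p); rewrite path_fst // last_fst.
Qed.

Hypothesis tpa_in_E : forall k, tpa tail B k -> k \in E.
Hypothesis tde_notin_E : forall k, tde tail B k -> k \notin E.
Hypothesis AB : [disjoint A & B].

Section FirstArrival.
Variables (m : nat) (f : nat -> N * nat) (d : nat -> bool).
Hypothesis walk_f : fwalk G m f d.
Hypothesis start_f : f 0 \in nubar W t' A t.-1.
Hypothesis arrive_f : f m \in nu B t.
Hypothesis before_arrival : forall i, i < m -> f i \notin nu B t.
Hypothesis conn_f : fconnecting (active G Z) (fun v => v \notin Z) m f d.

Lemma start_time : (f 0).2 < t.
Proof. by case/and3P: start_f => _ f0 _; nat_lia. Qed.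

Lemma arrive_time : (f m).2 = t.
Proof. by case/andP: arrive_f => _ /eqP. Qed.

Lemma fwd_edge i : i < m -> d i -> G (f i) (f i.+1).
Proof. by move=> im di; have := walk_f im; rewrite di. Qed.

Lemma bwd_edge i : i < m -> ~~ d i -> G (f i.+1) (f i).
Proof. by move=> im di; have := walk_f im; rewrite (negbTE di). Qed.

Lemma time_fwd_run a b : a <= b <= m -> (forall i, a <= i < b -> d i) -> (f a).2 <= (f b).2.
Proof. by move=> ab run; have [p /path_time_le + <-] := fwalk_fwd_run walk_f ab run. Qed.

Lemma time_bwd_run a b : a <= b <= m -> (forall i, a <= i < b -> ~~ d i) -> (f b).2 <= (f a).2.
Proof. by move=> ab run; have [p /path_time_le + <-] := fwalk_bwd_run walk_f ab run. Qed.

Lemma collider_time k : 0 < k < m -> is_collider d k ->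
  (f k).2 <= t /\ ((f k).2 = t -> (f k).1 \in E).
Proof. by move=> k_int col; have := conn_f k_int; rewrite col => /active_Z_time. Qed.

Lemma noncollider_notin_Z k : 0 < k < m -> ~~ is_collider d k -> f k \notin Z.
Proof. by move=> k_int ncol; have := conn_f k_int; rewrite (negbTE ncol). Qed.

Lemma noncollider_notin_E k : 0 < k < m -> ~~ is_collider d k -> (f k).2 = t ->
  (f k).1 \notin E.
Proof.
move=> k_int ncol kt; apply: contra (noncollider_notin_Z k_int ncol) => kE.
exact: E_in_Z.
Qed.

Lemma time_le k : k <= m -> (f k).2 <= t.
Proof.
elim: k => [_ | k IH km]; first exact: ltnW start_time.
have {}IH := IH (ltnW km).
case dk: (d k); last by have := G_time_le (bwd_edge km (negbT dk)); nat_lia.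
have [run | [r [/andP[kr rm] col run]]] := fwd_run_or_collider km dk.
  rewrite -arrive_time; apply: time_fwd_run => [|i ki]; [nat_lia | apply: run; nat_lia].
have [|r_t _] := collider_time (k := r) _ col; first nat_lia.
apply: leq_trans r_t; apply: time_fwd_run => [|i ki]; [nat_lia | apply: run; nat_lia].
Qed.

Lemma notin_B_at_t i : i < m -> (f i).2 = t -> (f i).1 \notin B.
Proof. by move=> im it; have := before_arrival im; rewrite inE /= it eqxx andbT. Qed.

Lemma into_E_collider j v : 0 < j < m -> G (f j) v -> (f j).2 = t -> v.2 = t ->
  v.1 \in E -> is_collider d j.
Proof.
move=> j_int e jt vt vE; apply/idPn => ncol.
have /negP := noncollider_notin_E j_int ncol jt; apply.
by apply: (tail_into_E e); rewrite ?jt ?vt.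
Qed.

Lemma bwd_time_ne k : 0 < k < m -> ~~ d k.-1 -> (f k).2 != t.
Proof.
move=> /andP[k0 km] ndk1; apply/eqP => kt.
have [run | [i [/andP[i0 ik] col run]]] := bwd_run_or_collider k0 ndk1.
  have : (f k).2 <= (f 0).2 by apply: time_bwd_run => [|l lk]; [nat_lia | apply: run; nat_lia].
  by have := start_time; nat_lia.
have di : ~~ d i by apply: run; nat_lia.
have e : G (f i.+1) (f i) by apply: bwd_edge => //; nat_lia.
have [|it iE] := collider_time (k := i) _ col; first nat_lia.
have : (f k).2 <= (f i.+1).2 by apply: time_bwd_run => [|l lk]; [nat_lia | apply: run; nat_lia].
have := G_time_le e => ? ?; have i1t : (f i.+1).2 = t by nat_lia.
have i_t : (f i).2 = t by nat_lia.
have i1_int : 0 < i.+1 < m by nat_lia.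
by have := into_E_collider i1_int e i1t i_t (iE i_t); rewrite /is_collider /= (negbTE di).
Qed.

Lemma fwd_time_ne k : 0 < k < m -> d k -> (f k).2 != t.
Proof.
move=> /andP[k0 km] dk; apply/eqP => kt.
have [run | [r [/andP[kr rm] col run]]] := fwd_run_or_collider km dk.
  have dm1 : d m.-1 by apply: run; nat_lia.
  have e : G (f m.-1) (f m).
    by rewrite -{2}(prednK (ltn_trans k0 km)); apply: fwd_edge => //; nat_lia.
  have : (f k).2 <= (f m.-1).2 by apply: time_fwd_run => [|l lk]; [nat_lia | apply: run; nat_lia].
  have := G_time_le e; rewrite arrive_time => ? ?; have m1t : (f m.-1).2 = t by nat_lia.
  have m1E : (f m.-1).1 \in E.
    apply: tpa_in_E; split; first by apply: notin_B_at_t; nat_lia.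
    by case/andP: arrive_f => mB _; exists (f m).1; rewrite // G_tail // m1t arrive_time.
  have m1_int : 0 < m.-1 < m by nat_lia.
  have ncol : ~~ is_collider d m.-1 by rewrite /is_collider dm1 andbF.
  by have := noncollider_notin_E m1_int ncol m1t; rewrite m1E.
have dr1 : d r.-1 by apply: run; nat_lia.
have e : G (f r.-1) (f r).
  by rewrite -{2}(prednK (ltn_trans k0 kr)); apply: fwd_edge => //; nat_lia.
have [|rt rE] := collider_time (k := r) _ col; first nat_lia.
have : (f k).2 <= (f r.-1).2 by apply: time_fwd_run => [|l lk]; [nat_lia | apply: run; nat_lia].
have := G_time_le e => ? ?; have r1t : (f r.-1).2 = t by nat_lia.
have r_t : (f r).2 = t by nat_lia.
have r1_int : 0 < r.-1 < m by nat_lia.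
by have := into_E_collider r1_int e r1t r_t (rE r_t); rewrite /is_collider dr1 andbF.
Qed.

Lemma noncollider_time_lt k : 0 < k < m -> ~~ is_collider d k -> (f k).2 < t.
Proof.
move=> k_int; rewrite /is_collider negb_and negbK ltn_neqAle time_le; last nat_lia.
by case/orP=> [/(bwd_time_ne k_int) | /(fwd_time_ne k_int)] ->.
Qed.

Lemma arrival_pos : 0 < m.
Proof.
rewrite lt0n; apply/eqP => m0; have := arrive_time; rewrite m0.
by move=> f0t; have := start_time; rewrite f0t ltnn.
Qed.

Lemma valid_f k : k < m -> valid W t' (f k).
Proof.
move=> km; case dk: (d k).
  by case: (G_edges (fwd_edge km dk)).
by case: (G_edges (bwd_edge km (negbT dk))).
Qed.

Lemma noncollider_notin_BC k : 0 < k < m -> ~~ is_collider d k ->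
  (f k).1 \notin B /\ (f k).1 \notin C.
Proof.
move=> k_int ncol; apply/andP; apply: notin_Z (noncollider_notin_Z k_int ncol) _.
  by apply: valid_f; nat_lia.
exact: noncollider_time_lt.
Qed.

Lemma last_step_fwd : d m.-1.
Proof.
have m0 := arrival_pos; apply/idPn => ndm1.
have e : G (f m) (f m.-1) by rewrite -{1}(prednK m0); apply: bwd_edge => //; nat_lia.
have m1t : (f m.-1).2 = t.
  by have := G_time_le e; have := time_le (leq_pred m); rewrite arrive_time; nat_lia.
have m1_int : 0 < m.-1 < m.
  rewrite ltn_predL m0 andbT lt0n; apply/eqP => m1_0; move: m1t; rewrite m1_0.
  by apply/eqP; rewrite neq_ltn start_time.
have col : is_collider d m.-1.
  by apply/idPn => /(noncollider_time_lt m1_int); nat_lia.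
have [_ /(_ m1t) m1E] := collider_time m1_int col.
suff : (f m.-1).1 \notin E by rewrite m1E.
apply: tde_notin_E; split.
  by apply: notin_B_at_t; nat_lia.
case/andP: arrive_f => mB _; exists (f m).1 => //; exists [:: (f m.-1).1].
by rewrite /= G_tail // m1t arrive_time.
Qed.

Lemma fwalk_fst : fwalk [rel i j | star i j && (i \notin B)] m (fun i => (f i).1) d.
Proof.
move=> i im; case di: (d i) => /=.
  rewrite G_star ?fwd_edge //=; case: i im di => [|i] im di.
    by case/and3P: start_f => f0A _ _; rewrite (disjointFr AB f0A).
  have i_int : 0 < i.+1 < m by nat_lia.
  have ncol : ~~ is_collider d i.+1 by rewrite /is_collider di andbF.
  by case: (noncollider_notin_BC i_int ncol).
rewrite G_star ?bwd_edge ?di //=; case: (ltnP i.+1 m) => i1m.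
  have ncol : ~~ is_collider d i.+1 by rewrite /is_collider /= di.
  by case: (noncollider_notin_BC (_ : 0 < i.+1 < m) ncol).
have m1 : i = m.-1 by nat_lia.
by rewrite m1 last_step_fwd in di.
Qed.

Lemma fconnecting_fst : fconnecting (active star [predU mem B & mem C]) (fun v => v \notin C)
  m (fun i => (f i).1) d.
Proof.
move=> k k_int; have := conn_f k_int; case: ifP => [_ | /negbT ncol _].
  exact: active_Z_fst.
by case: (noncollider_notin_BC k_int ncol).
Qed.

End FirstArrival.

Lemma deltasep_no_dconnecting_fwalk : deltasep star (mem A) (mem B) (mem C) ->
  forall m f d, fwalk G m f d -> f 0 \in nubar W t' A t.-1 -> f m \in nu B t ->
  ~ fconnecting (active G Z) (fun v => v \notin Z) m f d.
Proof.
move=> sep m f d w start arrive conn.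
have arrives : exists k, (k <= m) && (f k \in nu B t) by exists m; rewrite leqnn arrive.
case: (ex_minnP arrives) => j /andP[jm arrive_j] j_min.
have before_j i : i < j -> f i \notin nu B t.
  move=> ij; apply/negP => arrive_i.
  by have := j_min i; rewrite arrive_i (ltnW (leq_trans ij jm)); nat_lia.
have wj := fwalk_prefix jm w; have connj := fconnecting_prefix jm conn.
have jB : (f j).1 \in B by case/andP: arrive_j.
have [m' [f' [d' [w' f'0 f'B conn']]]] := fwalk_truncate_at_B
  (fwalk_fst wj start arrive_j before_j connj) jB
  (fconnecting_fst wj start arrive_j before_j connj).
apply: (sep_gen_no_dconnecting_fwalk _ sep w') conn' => //; first by move=> x y /andP[].
by rewrite f'0; case/and3P: start.
Qed.

End UnrolledGraph.

Theorem lemma1 (N : finType) (W : {set N}) (star tail : rel N) (t' : nat)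
    (G : rel (N * nat)) (A B C E : {set N}) :
  proper_pair W star tail t' G ->
  B \subset (~: W) ->
  [disjoint A & B] -> [disjoint A & C] -> [disjoint B & C] ->
  tail_ancestral W tail E ->
  (forall k, tde tail B k -> k \notin E) ->
  E \subset C ->
  (forall k, tpa tail B k -> k \in E) ->
  deltasep star (mem A) (mem B) (mem C) ->
  forall t, 0 < t <= t' ->
    dsep G (nubar W t' A t.-1) (nu B t)
      [predU nubar W t' (B :|: C) t.-1 & nu E t].
Proof.
move=> proper _ AB _ _ TA tde_E EC tpa_E sep t /andP[t0 _] x s pth ends.
have [[tail_star _] _] := proper.
have no_walk := deltasep_no_dconnecting_fwalk tail_star (proper_pair_unrolled_edges proper)
  TA t0 EC tpa_E tde_E AB sep.
apply: NNPP => /not_blocked_fconnecting conn.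
have /walk_fwalk w := proj1 (andP pth).
case: ends => [[xA sB] | [xB sA]].
  by apply: no_walk w _ _ conn; rewrite // -wlast_wfun.
apply: no_walk (fwalk_rev w) _ _ (fconnecting_rev conn); by rewrite ?subn0 ?subnn -?wlast_wfun.
Qed.
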